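(* Let $a$ be a real number and $r\ge1$. On the space of polynomials in $y=(y_1,\dots,y_r)$, define the operators $$D_j=\partial_{y_j}+\frac a2\sum_{i\ne j}\frac{1}{y_j-y_i}(1-s_{ij}),\qquad U_j=D_jy_j-\frac a2\sum_{i<j}s_{ij},$$ where $s_{ij}$ acts by interchanging the variables $y_i$ and $y_j$ and $D_jy_j$ denotes the composition of multiplication by $y_j$ followed by $D_j$. Then $$(D_1D_2\cdots D_r)(y_1y_2\cdots y_r)=U_1U_2\cdots U_r,$$ where $y_1\cdots y_r$ denotes the multiplication operator. *)

From HB Require Import structures.
From Stdlib Require Import ClassicalEpsilon.
From mathcomp Require Import all_boot all_order all_algebra all_fingroup.
From mathcomp Require Import reals.
From mathcomp.multinomials Require Import mpoly.
Set Implicit Arguments. Unset Strict Implicit. Unset Printing Implicit Defensive.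
Import Order.TTheory GRing.Theory Num.Theory.
Local Open Scope ring_scope.

Section Dunkl.
Variables (R : realType) (r : nat) (a : R).

Definition swapv (i j : 'I_r) (p : {mpoly R[r]}) : {mpoly R[r]} :=
  msym (tperm i j) p.

(* The operator (y_j - y_i)^{-1} (1 - s_ij) on polynomials: the (unique, since
   the division is exact in the polynomial ring) q with (y_j - y_i) q = p - s_ij p. *)
Definition divdiff (i j : 'I_r) (p : {mpoly R[r]}) : {mpoly R[r]} :=
  epsilon (inhabits 0) (fun q : {mpoly R[r]} => ('X_j - 'X_i) * q = p - swapv i j p).

Definition Dunkl (j : 'I_r) (p : {mpoly R[r]}) : {mpoly R[r]} :=
  mderiv j p + (a / 2) *: \sum_(i < r | i != j) divdiff i j p.

Definition Uop (j : 'I_r) (p : {mpoly R[r]}) : {mpoly R[r]} :=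
  Dunkl j ('X_j * p) - (a / 2) *: \sum_(i < r | (i < j)%N) swapv i j p.

Definition compall (F : 'I_r -> {mpoly R[r]} -> {mpoly R[r]}) :
  {mpoly R[r]} -> {mpoly R[r]} :=
  foldr (fun j g => F j \o g) id (enum 'I_r).

Definition mulY (p : {mpoly R[r]}) : {mpoly R[r]} := (\prod_(i < r) 'X_i) * p.

End Dunkl.

From Stdlib Require Import ClassicalEpsilon.
From mathcomp Require Import all_boot all_order all_algebra all_fingroup.
From mathcomp Require Import reals.
From mathcomp.multinomials Require Import mpoly.
From mathcomp Require Import ring.
Set Implicit Arguments. Unset Strict Implicit. Unset Printing Implicit Defensive.
Import Order.TTheory GRing.Theory Num.Theory.
Local Open Scope ring_scope.

(* Writing m_j = y_1 ... y_(j-1), the whole identity telescopes from the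
   single intertwining relation D_j m_(j+1) = m_j U_j.  Since m_j does not
   depend on y_j, D_j (m_j f) = m_j D_j f + a/2 sum_(i <> j) Δ_ij(m_j) s_ij f
   by the twisted Leibniz rule Δ_ij(f g) = f Δ_ij(g) + Δ_ij(f) s_ij(g) of the
   divided differences Δ_ij = (y_j - y_i)^-1 (1 - s_ij); and Δ_ij(m_j) is
   -m_j / y_i for i < j and 0 for i > j, which produces the correction term
   -a/2 sum_(i<j) s_ij of U_j. *)

Section DividedDifferences.
Variables (R : realType) (n : nat).
Implicit Types (f g p q x y : {mpoly R[n]}) (i j k : 'I_n).

Lemma swapvX i j k : swapv i j 'X_k = 'X_(tperm i j k) :> {mpoly R[n]}.
Proof.
rewrite /swapv msymX; congr 'X_[_]; apply/mnmP=> l.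
by rewrite !mnmE tpermV -(inj_eq (@perm_inj _ (tperm i j))) tpermK eq_sym.
Qed.

Lemma swapvM i j f g : swapv i j (f * g) = swapv i j f * swapv i j g.
Proof. exact: msymM. Qed.

Lemma swapv_prodX i j (P : pred 'I_n) :
    (forall k, P k -> (k != i) && (k != j)) ->
  swapv i j (\prod_(k | P k) 'X_k) = \prod_(k | P k) 'X_k :> {mpoly R[n]}.
Proof.
move=> HP; rewrite /swapv rmorph_prod; apply: eq_bigr => k /HP /andP[ki kj].
by transitivity (swapv i j ('X_k : {mpoly R[n]})); rewrite // swapvX tpermD // eq_sym.
Qed.

Lemma XsubX_neq0 i j : i != j -> 'X_j - 'X_i != 0 :> {mpoly R[n]}.
Proof.
move=> ij; apply/eqP => /(congr1 (mcoeff U_(j))).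
by rewrite mcoeffB !mcoeffXU eqxx (negbTE ij) subr0 mcoeff0 => /eqP; rewrite oner_eq0.
Qed.

Definition is_divdiff i j p q := ('X_j - 'X_i) * q = p - swapv i j p.

Lemma is_divdiffD i j f g x y : is_divdiff i j f x -> is_divdiff i j g y ->
  is_divdiff i j (f + g) (x + y).
Proof. by rewrite /is_divdiff /swapv msymD mulrDr => -> ->; rewrite opprD addrACA. Qed.

Lemma is_divdiffZ i j (c : R) f x : is_divdiff i j f x ->
  is_divdiff i j (c *: f) (c *: x).
Proof. by rewrite /is_divdiff /swapv msymZ -scalerBr -scalerAr => ->. Qed.

Lemma is_divdiffM i j f g x y : is_divdiff i j f x -> is_divdiff i j g y ->
  is_divdiff i j (f * g) (f * y + x * swapv i j g).
Proof.
rewrite /is_divdiff swapvM => hx hy.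
transitivity (f * (('X_j - 'X_i) * y) + ('X_j - 'X_i) * x * swapv i j g); first ring.
by rewrite hx hy; ring.
Qed.

Lemma divdiff_exists i j p : exists q, is_divdiff i j p q.
Proof.
pose P f := exists q, is_divdiff i j f q.
have P1 : P 1 by exists 0; rewrite /is_divdiff /swapv msym1 subrr mulr0.
have PM f g : P f -> P g -> P (f * g).
  by move=> [x hx] [y hy]; eexists; apply: is_divdiffM hx hy.
have PX k : P 'X_k.
  rewrite /P /is_divdiff swapvX.
  by case: tpermP => [->|->|_ _]; [exists (-1) | exists 1 | exists 0]; ring.
elim/mpolyind: p => [|c m p _ _ [y hy]].
  by exists 0; rewrite /is_divdiff /swapv msym0 subrr mulr0.
have [x hx] : P 'X_[m].
  rewrite mpolyXE_id; apply: (big_ind P) => // k _.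
  by elim: (m k) => [|e IH]; rewrite ?expr0 ?exprS //; apply: PM.
by exists (c *: x + y); apply: is_divdiffD hy; apply: is_divdiffZ.
Qed.

Lemma divdiffP i j p : is_divdiff i j p (divdiff i j p).
Proof. have [q hq] := divdiff_exists i j p; exact: epsilon_spec (ex_intro _ q hq). Qed.

Lemma divdiff_unique i j p q : i != j -> is_divdiff i j p q -> divdiff i j p = q.
Proof. by move=> ij hq; apply: (mulfI (XsubX_neq0 ij)); rewrite divdiffP hq. Qed.

Lemma divdiffM i j f g : i != j ->
  divdiff i j (f * g) = f * divdiff i j g + divdiff i j f * swapv i j g.
Proof. by move=> ij; apply: divdiff_unique => //; apply: is_divdiffM; apply: divdiffP. Qed.

Lemma divdiff_swapv_id i j f : i != j -> swapv i j f = f -> divdiff i j f = 0.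
Proof. by move=> ij sf; apply: divdiff_unique; rewrite // /is_divdiff sf subrr mulr0. Qed.

Lemma divdiffXl i j : i != j -> divdiff i j 'X_i = -1 :> {mpoly R[n]}.
Proof. by move=> ij; apply: divdiff_unique; rewrite // /is_divdiff swapvX tpermL; ring. Qed.

Lemma Dunkl_mull (a : R) j m f : mderiv j m = 0 ->
  Dunkl a j (m * f) =
  m * Dunkl a j f + (a / 2) *: \sum_(i < n | i != j) divdiff i j m * swapv i j f.
Proof.
move=> dm; rewrite /Dunkl mderivM dm mul0r add0r.
under eq_bigr => i ij do rewrite divdiffM //.
by rewrite big_split /= scalerDr -mulr_sumr scalerAr mulrDr addrA.
Qed.

End DividedDifferences.

Section PrefixProducts.
Variables (R : realType) (n : nat) (a : R).
Implicit Types (p : {mpoly R[n]}) (i j : 'I_n).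

Definition prodX_lt (k : nat) : {mpoly R[n]} := \prod_(i < n | (i < k)%N) 'X_i.

Lemma prodX_lt0 : prodX_lt 0 = 1.
Proof. exact: big_pred0. Qed.

Lemma prodX_lt_all : prodX_lt n = \prod_(i < n) 'X_i.
Proof. by apply: eq_bigl => i; rewrite ltn_ord. Qed.

Lemma prodX_ltS j : prodX_lt j.+1 = prodX_lt j * 'X_j.
Proof.
rewrite /prodX_lt (bigD1 j) //= mulrC; congr (_ * _); apply: eq_bigl => i.
by rewrite ltnS ltn_neqAle andbC.
Qed.

Lemma mderiv_prodX_lt j : mderiv j (prodX_lt j) = 0.
Proof.
apply: (big_ind (fun q : {mpoly R[n]} => mderiv j q = 0)).
- by rewrite -mpolyC1 mderivC.
- by move=> x y dx dy; rewrite mderivM dx dy mul0r mulr0 addr0.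
- by move=> k /ltn_eqF kj; rewrite mderivX mnm1E -(inj_eq val_inj) kj scale0r.
Qed.

Lemma divdiff_prodX_lt i j : i != j ->
  divdiff i j (prodX_lt j) * 'X_i = if (i < j)%N then - prodX_lt j else 0.
Proof.
move=> ij; case: ltnP => [lt_ij | le_ji]; last first.
  rewrite divdiff_swapv_id ?mul0r //; apply: swapv_prodX => k lt_kj.
  by rewrite -!(inj_eq val_inj) /= !ltn_eqF // (leq_trans lt_kj).
rewrite /prodX_lt (bigD1 i) //=; set m := \prod_(k | _) _.
have sym_m : swapv i j m = m.
  apply: swapv_prodX => k /andP[lt_kj ->].
  by rewrite -(inj_eq val_inj) /= ltn_eqF.
rewrite divdiffM // divdiffXl // sym_m.
by rewrite divdiff_swapv_id // mulr0 add0r mulN1r mulNr mulrC.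
Qed.

Lemma Dunkl_prodX_lt j p : Dunkl a j (prodX_lt j.+1 * p) = prodX_lt j * Uop a j p.
Proof.
rewrite prodX_ltS -mulrA Dunkl_mull ?mderiv_prodX_lt // /Uop.
under eq_bigr => i ij do rewrite swapvM swapvX tpermR mulrA divdiff_prodX_lt //.
rewrite (eq_bigr (fun i => if (i < j)%N then - (prodX_lt j * swapv i j p) else 0));
  last by move=> i _; case: ifP; rewrite ?mul0r ?mulNr.
rewrite -big_mkcondr /= (eq_bigl (fun i : 'I_n => (i < j)%N)); last first.
  by move=> i; rewrite andb_idl // => /ltn_eqF; rewrite -(inj_eq val_inj) => ->.
by rewrite sumrN -mulr_sumr scalerN scalerAr mulrBr.
Qed.

End PrefixProducts.

Lemma foldr_comp_intertwine (I T : Type) (F G : I -> T -> T) (M : nat -> T -> T)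
    (v : I -> nat) (s : seq I) (k : nat) :
  map v s = iota k (size s) ->
  (forall j x, F j (M (v j).+1 x) = M (v j) (G j x)) ->
  forall x, foldr (fun j g => F j \o g) id s (M (k + size s)%N x) =
            M k (foldr (fun j g => G j \o g) id s x).
Proof.
move=> + FMG; elim: s k => [k _ x | j s IH k [vj vs] x] /=; first by rewrite addn0.
by rewrite addnS -addSn IH // -vj FMG.
Qed.

Theorem lemma6p1 (R : realType) (a : R) (r : nat) (hr : (1 <= r)%N)
  (p : {mpoly R[r]}) :
  compall (Dunkl a) (mulY p) = compall (Uop a) p.
Proof.
have := @foldr_comp_intertwine _ _ (Dunkl a) (Uop a) (fun k q => prodX_lt R r k * q)
  (@nat_of_ord r) (enum 'I_r) 0.
rewrite val_enum_ord size_enum_ord add0n prodX_lt_all prodX_lt0 => chain.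
rewrite /compall /mulY chain ?mul1r // => j q; exact: Dunkl_prodX_lt.
Qed.
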